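(* Let $S$ be a group and $A,B$ left $S$-acts such that there exist injective homomorphisms $A\rightarrowtail B^I$ and $B\rightarrowtail A^J$ for some sets $I,J$. Then $C\amalg A$ and $C\amalg B$ are geometrically equivalent for every left $S$-act $C$.
   Context: A left $S$-act is a nonempty set with an action $S\times A\to A$ satisfying $1a=a$, $(st)a=s(ta)$; homomorphisms preserve the action; $\amalg$ denotes coproduct (disjoint union) and $B^I$ is the cartesian power with componentwise action. For a nonempty finite set $X$, $F_X=\coprod_{x\in X}S_x$ is the free $S$-act on $X$. For an $S$-act $G$ and a relation $T\subseteq F_X\times F_X$, $T'_G=\{\mu:F_X\to G \text{ homomorphism}: T\subseteq\ker\mu\}$ and $T''_G=\bigcap_{\mu\in T'_G}\ker\mu$ (empty intersection $=F_X\times F_X$). $S$-acts $G_1,G_2$ are geometrically equivalent iff $T''_{G_1}=T''_{G_2}$ for all nonempty finite $X$ and all $T\subseteq F_X\times F_X$. *)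

From Stdlib Require Import List FunctionalExtensionality.

Set Implicit Arguments.

Record Group := {
  gcar :> Type;
  gmul : gcar -> gcar -> gcar;
  gone : gcar;
  ginv : gcar -> gcar;
  gmulA : forall x y z, gmul x (gmul y z) = gmul (gmul x y) z;
  gmul1l : forall x, gmul gone x = x;
  gmulVl : forall x, gmul (ginv x) x = gone
}.

Record Act (S : Group) := {
  acar :> Type;
  act : gcar S -> acar -> acar;
  act1 : forall a, act (gone S) a = a;
  actM : forall s t a, act (gmul S s t) a = act s (act t a);
  anonempty : inhabited acar
}.


Definition is_hom {S : Group} {A B : Act S} (f : A -> B) : Prop :=
  forall (s : gcar S) (a : A), f (act A s a) = act B s (f a).

Definition coprod_act_fun (S : Group) (C A : Act S) (s : gcar S) (x : C + A) : C + A :=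
  match x with inl c => inl (act C s c) | inr a => inr (act A s a) end.

Lemma coprod_act1 (S : Group) (C A : Act S) (x : C + A) :
  coprod_act_fun C A (gone S) x = x.
Proof. destruct x; simpl; rewrite act1; reflexivity. Qed.

Lemma coprod_actM (S : Group) (C A : Act S) s t (x : C + A) :
  coprod_act_fun C A (gmul S s t) x = coprod_act_fun C A s (coprod_act_fun C A t x).
Proof. destruct x; simpl; rewrite actM; reflexivity. Qed.

Lemma coprod_nonempty (S : Group) (C A : Act S) : inhabited (C + A).
Proof. destruct (anonempty C) as [c]; exact (inhabits (inl c)). Qed.

Definition coprod (S : Group) (C A : Act S) : Act S :=
  {| acar := C + A; act := coprod_act_fun C A;
     act1 := coprod_act1 C A; actM := coprod_actM C A;
     anonempty := coprod_nonempty C A |}.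

Lemma pow_act1 (S : Group) (B : Act S) (I : Type) (f : I -> B) :
  (fun i => act B (gone S) (f i)) = f.
Proof. apply functional_extensionality; intro i; apply act1. Qed.

Lemma pow_actM (S : Group) (B : Act S) (I : Type) s t (f : I -> B) :
  (fun i => act B (gmul S s t) (f i)) = (fun i => act B s (act B t (f i))).
Proof. apply functional_extensionality; intro i; apply actM. Qed.

Lemma pow_nonempty (S : Group) (B : Act S) (I : Type) : inhabited (I -> B).
Proof. destruct (anonempty B) as [b]; exact (inhabits (fun _ => b)). Qed.

Definition pow_act (S : Group) (B : Act S) (I : Type) : Act S :=
  {| acar := I -> B; act := fun s f i => act B s (f i);
     act1 := @pow_act1 S B I; actM := @pow_actM S B I;
     anonempty := pow_nonempty B I |}.

(** Free S-act on X: F_X = ⨿_{x in X} S x, elements (s, x) with t (s, x) = (t s, x). *)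
Lemma free_act1 (S : Group) (X : Type) (u : gcar S * X) :
  (gmul S (gone S) (fst u), snd u) = u.
Proof. destruct u; simpl; rewrite gmul1l; reflexivity. Qed.

Lemma free_actM (S : Group) (X : Type) s t (u : gcar S * X) :
  (gmul S (gmul S s t) (fst u), snd u) =
  (gmul S s (fst (gmul S t (fst u), snd u)), snd (gmul S t (fst u), snd u)).
Proof. destruct u; simpl; rewrite gmulA; reflexivity. Qed.

Lemma free_nonempty (S : Group) (X : Type) (x0 : inhabited X) : inhabited (gcar S * X).
Proof. destruct x0 as [x]; exact (inhabits (gone S, x)). Qed.

Definition free_act (S : Group) (X : Type) (x0 : inhabited X) : Act S :=
  {| acar := gcar S * X; act := fun s u => (gmul S s (fst u), snd u);
     act1 := @free_act1 S X; actM := @free_actM S X;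
     anonempty := free_nonempty S x0 |}.

Definition finite_type (X : Type) : Prop := exists l : list X, forall x, In x l.

Definition Tprime (S : Group) (X : Type) (x0 : inhabited X) (G : Act S)
  (T : free_act S x0 -> free_act S x0 -> Prop) (mu : free_act S x0 -> G) : Prop :=
  is_hom mu /\ forall u v, T u v -> mu u = mu v.

(** T''_G : intersection of the kernels of all mu in T'_G
    (the empty intersection is all of F_X × F_X). *)
Definition Tsecond (S : Group) (X : Type) (x0 : inhabited X) (G : Act S)
  (T : free_act S x0 -> free_act S x0 -> Prop) (u v : free_act S x0) : Prop :=
  forall mu : free_act S x0 -> G, Tprime G T mu -> mu u = mu v.

Definition geom_equiv (S : Group) (G1 G2 : Act S) : Prop :=
  forall (X : Type) (x0 : inhabited X), finite_type X ->
  forall (T : free_act S x0 -> free_act S x0 -> Prop) (u v : free_act S x0),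
    Tsecond G1 T u v <-> Tsecond G2 T u v.

(** If [A] embeds in a power of [B], the homomorphisms [A -> B] separate
    the points of [A].  Whenever the homomorphisms [G -> H] separate points,
    every kernel pair forced in [H] is forced in [G] (compose a witness
    [mu : F_X -> G] with all separating maps), so [T''_H] is contained in
    [T''_G].  Separation passes to [C ⨿ A] and [C ⨿ B] by applying a
    separating map on the second summand and the identity on [C]; telling
    [C] apart from [A] needs just one homomorphism [A -> B], which exists
    because of the mutual embeddings. *)

From Stdlib Require Import Classical FunctionalExtensionality.

Set Implicit Arguments.

Definition separated_by (S : Group) (G H : Act S) : Prop :=
  forall x y : G, (forall h : G -> H, is_hom h -> h x = h y) -> x = y.

Lemma Tsecond_separated (S : Group) (G H : Act S) (X : Type) (x0 : inhabited X)
  (T : free_act S x0 -> free_act S x0 -> Prop) (u v : free_act S x0) :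
  separated_by G H -> Tsecond H T u v -> Tsecond G T u v.
Proof.
  intros sepGH HT mu [hom_mu T_mu].
  apply sepGH; intros h hom_h.
  apply (HT (fun w => h (mu w))); split.
  - intros s w; cbv beta; rewrite hom_mu; apply hom_h.
  - intros w w' Tww'; rewrite (T_mu w w' Tww'); reflexivity.
Qed.

Lemma geom_equiv_separated (S : Group) (G H : Act S) :
  separated_by G H -> separated_by H G -> geom_equiv G H.
Proof.
  intros sepGH sepHG X x0 _ T u v; split; apply Tsecond_separated; assumption.
Qed.

Lemma separated_by_pow_embedding (S : Group) (A B : Act S) (I : Type)
  (f : A -> pow_act B I) :
  is_hom f -> (forall a1 a2, f a1 = f a2 -> a1 = a2) -> separated_by A B.
Proof.
  intros hom_f inj_f a a' Hsep.
  apply inj_f, functional_extensionality; intro i.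
  apply (Hsep (fun x => f x i)).
  intros s x; cbn; rewrite hom_f; reflexivity.
Qed.

Lemma subsingleton_pow_embedding (A B : Type) (I : Type) (f : A -> I -> B) :
  (forall a1 a2, f a1 = f a2 -> a1 = a2) ->
  (I -> forall b b' : B, b = b') -> forall a a' : A, a = a'.
Proof.
  intros inj_f subB a a'.
  apply inj_f, functional_extensionality; intro i; apply (subB i).
Qed.

(* With [I] empty the embedding forces [A], hence [B], to be a point. *)
Lemma hom_of_pow_embeddings (S : Group) (A B : Act S) (I J : Type)
  (f : A -> pow_act B I) (g : B -> pow_act A J) :
  is_hom f -> (forall a1 a2, f a1 = f a2 -> a1 = a2) ->
  (forall b1 b2, g b1 = g b2 -> b1 = b2) ->
  exists h : A -> B, is_hom h.
Proof.
  intros hom_f inj_f inj_g.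
  destruct (classic (inhabited I)) as [[i] | noI].
  - exists (fun a => f a i); intros s a; cbn; rewrite hom_f; reflexivity.
  - assert (subA : forall a a' : A, a = a').
    { apply (subsingleton_pow_embedding f inj_f).
      intro i; exfalso; exact (noI (inhabits i)). }
    assert (subB : forall b b' : B, b = b')
      by exact (subsingleton_pow_embedding g inj_g (fun _ => subA)).
    destruct (anonempty B) as [b0].
    exists (fun _ => b0); intros s a; apply subB.
Qed.

Definition coprod_map (S : Group) (C A B : Act S) (h : A -> B) :
  coprod C A -> coprod C B :=
  fun x => match x with inl c => inl c | inr a => inr (h a) end.

Arguments coprod_map {S} C {A B} h.

Lemma coprod_map_hom (S : Group) (C A B : Act S) (h : A -> B) :
  is_hom h -> is_hom (coprod_map C h).
Proof.
  intros hom_h s [c | a]; cbn; [reflexivity | rewrite hom_h; reflexivity].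
Qed.

Lemma separated_by_coprod (S : Group) (C A B : Act S) :
  separated_by A B -> (exists h : A -> B, is_hom h) ->
  separated_by (coprod C A) (coprod C B).
Proof.
  intros sepAB [h0 hom_h0] x y Hsep.
  assert (Hh0 := Hsep _ (coprod_map_hom hom_h0)).
  destruct x as [c | a], y as [c' | a']; cbn in Hh0; try discriminate.
  - injection Hh0 as ->; reflexivity.
  - f_equal; apply sepAB; intros h hom_h.
    assert (Hh := Hsep _ (coprod_map_hom hom_h)).
    injection Hh; trivial.
Qed.

Theorem proposition3p19 (S : Group) (A B : Act S) (I J : Type)
  (f : A -> pow_act B I) (g : B -> pow_act A J) :
  is_hom f -> (forall a1 a2, f a1 = f a2 -> a1 = a2) ->
  is_hom g -> (forall b1 b2, g b1 = g b2 -> b1 = b2) ->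
  forall C : Act S, geom_equiv (coprod C A) (coprod C B).
Proof.
  intros hom_f inj_f hom_g inj_g C.
  apply geom_equiv_separated; apply separated_by_coprod.
  - exact (separated_by_pow_embedding hom_f inj_f).
  - exact (hom_of_pow_embeddings g hom_f inj_f inj_g).
  - exact (separated_by_pow_embedding hom_g inj_g).
  - exact (hom_of_pow_embeddings f hom_g inj_g inj_f).
Qed.
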